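(* Let $k\ge 2$ and $n\ge 1$ be integers and $x=\zeta_k$. Let $S=\mathrm{circ}(s_0,\dots,s_{k-1})\in\mathrm{BH}(k,k)$ be a circulant matrix, and for $0\le m\le k-1$ let $\lambda_m=\sum_{j=0}^{k-1}s_jx^{mj}$ be its eigenvalues. Suppose $H\in\mathrm{BH}(kn+k,k)$ has the block form \[H=\begin{pmatrix} S & F_k\otimes j_n\\ F_k^{\ast}\otimes j_n^{\top} & A\end{pmatrix},\] where $A=[A_{ij}]_{0\le i,j\le k-1}$ is a $kn\times kn$ matrix partitioned into $n\times n$ blocks $A_{ij}$. Then (1) for $i\neq j$, the entries of every row and of every column of $A_{ij}$ sum to $0$; (2) for each $0\le m\le k-1$, the entries of every row and of every column of $A_{mm}$ sum to $-\overline{\lambda_m}$.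
   Context: $\zeta_k=e^{2\pi\sqrt{-1}/k}$. A complex Hadamard matrix of order $N$ is an $N\times N$ matrix $H$ with all entries of modulus $1$ and $HH^{\ast}=NI_N$, where $^{\ast}$ is conjugate transpose. $\mathrm{BH}(N,k)$ denotes the set of $N\times N$ complex Hadamard matrices with all entries $k$-th roots of unity. $\mathrm{circ}(s_0,\dots,s_{k-1})$ is the $k\times k$ matrix whose $(i,j)$ entry ($0\le i,j\le k-1$) is $s_{(j-i)\bmod k}$, i.e. first row $(s_0,\dots,s_{k-1})$ and each subsequent row the cyclic shift one place to the right of the previous. $F_k=[x^{(i-1)(j-1)}]_{1\le i,j\le k}$ is the Fourier matrix, $j_n$ is the all-ones row vector of length $n$, $j_n^\top$ its transpose, and $\otimes$ is the Kronecker product $A\otimes B=[a_{ij}B]$. *)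

(* complex numbers are R[i] (real_closed.complex) over an
   abstract R : realType (mathcomp-analysis), so that cos, sin, pi exist. *)
From HB Require Import structures.
From mathcomp Require Import all_boot all_order all_algebra.
From mathcomp Require Import reals trigo.
From mathcomp Require Import complex mxtens.
Set Implicit Arguments. Unset Strict Implicit. Unset Printing Implicit Defensive.
Import Order.TTheory GRing.Theory Num.Theory.
Local Open Scope ring_scope.

Definition zeta (R : realType) (k : nat) : R[i] :=
  Complex (cos (2 * pi / k%:R)) (sin (2 * pi / k%:R)).

Definition ctmx (C : numClosedFieldType) (m n : nat) (M : 'M[C]_(m, n)) : 'M[C]_(n, m) :=
  map_mx Num.conj M^T.

Definition is_BH (C : numClosedFieldType) (N k : nat) (H : 'M[C]_N) : Prop :=
  (forall i j, H i j ^+ k = 1) /\ H *m ctmx H = N%:R%:M.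

Definition circ (C : pzRingType) (k : nat) (s : nat -> C) : 'M[C]_k :=
  \matrix_(i < k, j < k) s ((j + k - i) %% k)%N.

Definition Fourier (C : pzRingType) (k : nat) (x : C) : 'M[C]_k :=
  \matrix_(i < k, j < k) x ^+ (i * j)%N.

Definition jrow (C : pzRingType) (n : nat) : 'M[C]_(1, n) := const_mx 1.

(* the block (i,j) of an (k n) x (k n) matrix partitioned into n x n blocks;
   mxtens_index (i, r) is the index i * n + r, matching the Kronecker
   product tensmx (A *t B) of real_closed.mxtens *)
Definition mxblk (C : pzRingType) (k n : nat) (A : 'M[C]_(k * n)) (i j : 'I_k) : 'M[C]_n :=
  \matrix_(r < n, c < n) A (mxtens_index (i, r)) (mxtens_index (j, c)).
Arguments is_BH {C} N k H.

From HB Require Import structures.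
From mathcomp Require Import all_boot all_order all_algebra.
From mathcomp Require Import reals trigo.
From mathcomp Require Import complex mxtens.
Import Order.TTheory GRing.Theory Num.Theory.
Set Implicit Arguments.
Unset Strict Implicit.
Unset Printing Implicit Defensive.
Local Open Scope ring_scope.

(* Compare blocks of H H^* = (k + kn) I and H^* H = (k + kn) I.  The top-left
   block gives F F^* = k I, so F is invertible.  For a fixed r, let R be the
   k x k matrix whose (i, j) entry is the r-th row sum of A_ij, and K the
   analogue for column sums; the off-diagonal blocks give S F + F R^* = 0 and
   F^* S + K^* F^* = 0.  As S F = F L with L = diag(lambda_m), this forces
   R^* = K^* = -L. *)

Lemma sum_mxtens_index (V : nmodType) (m n : nat) (f : 'I_(m * n) -> V) :
  \sum_(u < m * n) f u = \sum_(i < m) \sum_(j < n) f (mxtens_index (i, j)).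
Proof.
rewrite pair_big /= (reindex (@mxtens_index m n)) /=; first by apply: eq_bigr => -[].
by exists (@mxtens_unindex m n) => u _; rewrite (mxtens_indexK, mxtens_unindexK).
Qed.

Section ConjTranspose.
Variable C : numClosedFieldType.

Lemma ctmxE (m n : nat) (M : 'M[C]_(m, n)) i j : ctmx M i j = (M j i)^*.
Proof. by rewrite !mxE. Qed.

Lemma unitmx_ctmx (n : nat) (M : 'M[C]_n) : (ctmx M \in unitmx) = (M \in unitmx).
Proof. by rewrite map_unitmx unitmx_tr. Qed.

Lemma ctmx_mul_scalar_unit (n : nat) (M : 'M[C]_n) (c : C) :
  c != 0 -> M *m ctmx M = c%:M -> M \in unitmx /\ ctmx M *m M = c%:M.
Proof.
move=> c_neq0 hM.
have hMinv : M *m (c^-1 *: ctmx M) = 1%:M.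
  by rewrite -scalemxAr hM scale_scalar_mx mulVf.
split; first by have [] := mulmx1_unit hMinv.
have := mulmx1C hMinv; rewrite -scalemxAl => /(congr1 ( *:%R c)).
by rewrite scalerA mulfV // scale1r => ->; rewrite scale_scalar_mx mulr1.
Qed.

Lemma ctmx_eq_opp_diag (n : nat) (X : 'M[C]_n) (d : 'rV[C]_n) :
  ctmx X = - diag_mx d -> X = - diag_mx (map_mx Num.conj d).
Proof.
move=> hX; apply/matrixP => i j; have := congr1 (fun M : 'M_n => M j i) hX.
rewrite !mxE => /(congr1 Num.conj); rewrite conjCK => ->.
by rewrite rmorphN rmorphMn eq_sym; case: eqP => [->|].
Qed.

End ConjTranspose.

Section Intertwining.
Variables (C : comUnitRingType) (k : nat) (S D : 'M[C]_k).

Lemma intertwine_scalar_inv (F G : 'M[C]_k) (c : C) :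
  F \in unitmx -> S *m F = F *m D -> G *m F = c%:M -> G *m S = D *m G.
Proof.
move=> hF hSF hGF; apply: (can_inj (mulmxK hF)).
by rewrite -mulmxA hSF mulmxA hGF -mulmxA hGF scalar_mxC.
Qed.

Lemma intertwine_addr_eq0 (F Y : 'M[C]_k) :
  F \in unitmx -> S *m F = F *m D -> S *m F + F *m Y = 0 -> Y = - D.
Proof.
move=> hF hSF /eqP; rewrite addrC addr_eq0 hSF -mulmxN => /eqP.
exact: (can_inj (mulKmx hF)).
Qed.

Lemma intertwine_addl_eq0 (G Y : 'M[C]_k) :
  G \in unitmx -> G *m S = D *m G -> G *m S + Y *m G = 0 -> Y = - D.
Proof.
move=> hG hGS /eqP; rewrite addrC addr_eq0 hGS -mulNmx => /eqP.
exact: (can_inj (mulmxK hG)).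
Qed.

End Intertwining.

Lemma circ_mul_Fourier (C : comPzRingType) (k : nat) (s : nat -> C) (x : C) :
  x ^+ k = 1 ->
  circ k s *m Fourier k x =
  Fourier k x *m diag_mx (\row_(m < k) \sum_(j < k) s j * x ^+ (m * j)).
Proof.
case: k => [|k] xk; first by apply/matrixP => -[].
apply/matrixP => a b; rewrite mul_mx_diag !mxE mulr_sumr.
rewrite (reindex_inj (addrI a)); apply: eq_bigr => j _; rewrite !mxE /=.
have le_a_k : (a <= k.+1)%N by exact: ltnW.
rewrite -addnBA // modnDml addnAC subnKC // modnDl modn_small //.
by rewrite mulrCA -exprD -(expr_mod _ xk) modnMml expr_mod // mulnDl [(j * b)%N]mulnC.
Qed.

Section BorderedMatrix.
Variables (C : numClosedFieldType) (k n : nat) (S F : 'M[C]_k) (A : 'M[C]_(k * n)).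

Definition bordered_mx : 'M[C]_(k + k * n) :=
  block_mx S
    (castmx (muln1 k, erefl (k * n)%N) (tensmx F (jrow C n)))
    (castmx (erefl (k * n)%N, muln1 k) (tensmx (ctmx F) (jrow C n)^T))
    A.

Local Notation H := bordered_mx.

Lemma bordered_mx_ul a q : H (lshift _ a) (lshift _ q) = S a q.
Proof. by rewrite block_mxEul. Qed.

Lemma bordered_mx_ur a b c : H (lshift _ a) (rshift _ (mxtens_index (b, c))) = F a b.
Proof.
rewrite block_mxEur castmxE /= !mxE mulr1 cast_ord_id mxtens_indexK.
by congr (F _ _); apply: val_inj => /=; rewrite divn1.
Qed.

Lemma bordered_mx_dl b c a : H (rshift _ (mxtens_index (b, c))) (lshift _ a) = (F a b)^*.
Proof.
rewrite block_mxEdl castmxE /= [LHS]mxE !mxE mulr1 cast_ord_id mxtens_indexK.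
by congr (F _ _)^*; apply: val_inj => /=; rewrite divn1.
Qed.

Lemma bordered_mx_dr u v : H (rshift _ u) (rshift _ v) = A u v.
Proof. by rewrite block_mxEdr. Qed.

Definition blk_rowsums (r : 'I_n) : 'M[C]_k := \matrix_(i, j) \sum_(c < n) mxblk A i j r c.
Definition blk_colsums (c : 'I_n) : 'M[C]_k := \matrix_(i, j) \sum_(r < n) mxblk A i j r c.

Lemma blk_rowsumsE r i j : blk_rowsums r i j = \sum_(c < n) mxblk A i j r c.
Proof. by rewrite mxE. Qed.

Lemma blk_colsumsE c i j : blk_colsums c i j = \sum_(r < n) mxblk A i j r c.
Proof. by rewrite mxE. Qed.

Lemma bordered_mx_mul_ct_ul (N : nat) : H *m ctmx H = N%:R%:M ->
  S *m ctmx S + n%:R *: (F *m ctmx F) = N%:R%:M.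
Proof.
move=> hHH; apply/matrixP => a a'.
have := congr1 (fun M : 'M_(k + k * n) => M (lshift _ a) (lshift _ a')) hHH.
rewrite !mxE eq_shift big_split_ord sum_mxtens_index /= => <-.
congr (_ + _); first by apply: eq_bigr => q _; rewrite !ctmxE !bordered_mx_ul.
rewrite mulr_natl -sumrMnl; apply: eq_bigr => b _.
under eq_bigr => c _ do rewrite !ctmxE !bordered_mx_ur.
by rewrite ctmxE sumr_const card_ord.
Qed.

Lemma bordered_mx_mul_ct_ur (N : nat) (r : 'I_n) : H *m ctmx H = N%:R%:M ->
  S *m F + F *m ctmx (blk_rowsums r) = 0.
Proof.
move=> hHH; apply/matrixP => a b.
have := congr1 (fun M : 'M_(k + k * n) => M (lshift _ a) (rshift _ (mxtens_index (b, r)))) hHH.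
rewrite !mxE eq_shift mulr0n big_split_ord sum_mxtens_index /= => h; apply: (etrans _ h).
congr (_ + _); first by apply: eq_bigr => q _; rewrite ctmxE bordered_mx_ul bordered_mx_dl conjCK.
apply: eq_bigr => b' _; rewrite !mxE rmorph_sum mulr_sumr; apply: eq_bigr => c _.
by rewrite ctmxE bordered_mx_ur bordered_mx_dr mxE.
Qed.

Lemma ct_bordered_mx_mul_dl (N : nat) (c : 'I_n) : ctmx H *m H = N%:R%:M ->
  ctmx F *m S + ctmx (blk_colsums c) *m ctmx F = 0.
Proof.
move=> hHH; apply/matrixP => b a.
have := congr1 (fun M : 'M_(k + k * n) => M (rshift _ (mxtens_index (b, c))) (lshift _ a)) hHH.
rewrite !mxE eq_shift mulr0n big_split_ord sum_mxtens_index /= => h; apply: (etrans _ h).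
congr (_ + _); first by apply: eq_bigr => q _; rewrite !ctmxE bordered_mx_ul bordered_mx_ur.
apply: eq_bigr => b' _; rewrite !mxE rmorph_sum mulr_suml; apply: eq_bigr => r _.
by rewrite ctmxE bordered_mx_dl bordered_mx_dr mxE.
Qed.

Lemma border_mul_ct_scalar : (n%:R : C) != 0 -> S *m ctmx S = k%:R%:M ->
  H *m ctmx H = (k + k * n)%:R%:M -> F *m ctmx F = k%:R%:M.
Proof.
move=> n_neq0 hSS /bordered_mx_mul_ct_ul.
rewrite hSS -[k%:R%:M]scalemx1 -[(k + k * n)%:R%:M]scalemx1.
rewrite natrD scalerDl [(k * n)%N]mulnC natrM -scalerA.
by move=> /addrI /(scalerI n_neq0) ->; rewrite scalemx1.
Qed.

End BorderedMatrix.

Theorem theorem5p3 (R : realType) (k n : nat) (s : nat -> R[i])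
    (A : 'M[R[i]]_(k * n)) :
  (2 <= k)%N -> (1 <= n)%N ->
  let x := zeta R k in
  let S := circ k s in
  is_BH k k S ->
  let H : 'M[R[i]]_(k + k * n) :=
    block_mx S
      (castmx (muln1 k, erefl (k * n)%N) (tensmx (Fourier k x) (jrow R[i] n)))
      (castmx (erefl (k * n)%N, muln1 k) (tensmx (ctmx (Fourier k x)) (jrow R[i] n)^T))
      A in
  is_BH (k + k * n) k H ->
  (forall i j : 'I_k, i != j ->
     (forall r : 'I_n, \sum_(c < n) mxblk A i j r c = 0) /\
     (forall c : 'I_n, \sum_(r < n) mxblk A i j r c = 0)) /\
  (forall m : 'I_k,
     let lambda := \sum_(j < k) s j * x ^+ (m * j)%N in
     (forall r : 'I_n, \sum_(c < n) mxblk A m m r c = - Num.conj lambda) /\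
     (forall c : 'I_n, \sum_(r < n) mxblk A m m r c = - Num.conj lambda)).
Proof.
move=> k_ge2 n_ge1 x S [_ hSS]; set F := Fourier k x.
rewrite -/(bordered_mx S F A) => H [hpow hHH]; rewrite {}/H in hpow hHH.
pose eig : 'rV_k := \row_(m < k) \sum_(j < k) s j * x ^+ (m * j).
have xk : x ^+ k = 1. (* x = F 1 1 is an entry of H *)
  have := hpow (lshift _ (Ordinal k_ge2))
               (rshift _ (mxtens_index (Ordinal k_ge2, Ordinal n_ge1))).
  by rewrite bordered_mx_ur mxE mul1n.
have k_neq0 : (k%:R : R[i]) != 0 by rewrite pnatr_eq0 -lt0n ltnW.
have n_neq0 : (n%:R : R[i]) != 0 by rewrite pnatr_eq0 -lt0n.
have N_neq0 : ((k + k * n)%:R : R[i]) != 0 by rewrite pnatr_eq0 addn_eq0 negb_and -lt0n ltnW.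
have hFF := border_mul_ct_scalar n_neq0 hSS hHH.
have [hFu hF'F] := ctmx_mul_scalar_unit k_neq0 hFF.
have hF'u : ctmx F \in unitmx by rewrite unitmx_ctmx.
have hH'H := (ctmx_mul_scalar_unit N_neq0 hHH).2.
have hSF : S *m F = F *m diag_mx eig := circ_mul_Fourier s xk.
have hF'S := intertwine_scalar_inv hFu hSF hF'F.
have rowsE r : blk_rowsums A r = - diag_mx (map_mx Num.conj eig).
  exact/ctmx_eq_opp_diag/(intertwine_addr_eq0 hFu hSF)/bordered_mx_mul_ct_ur/hHH.
have colsE c : blk_colsums A c = - diag_mx (map_mx Num.conj eig).
  exact/ctmx_eq_opp_diag/(intertwine_addl_eq0 hF'u hF'S)/ct_bordered_mx_mul_dl/hH'H.
split=> [i j /negPf neq_ij | m]; split=> [r|c];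
  by rewrite -(blk_rowsumsE, blk_colsumsE) (rowsE, colsE) !mxE ?neq_ij ?eqxx ?oppr0.
Qed.
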